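(* In the setting below, the subgroup $S'\le S$ is strongly closed in the fusion system $\mathcal{F}_\Delta(\mathbb{T})$: for every $P\le S$ and every morphism $f\in\mathrm{Hom}_{\mathcal{F}_\Delta(\mathbb{T})}(P,S)$ one has $f(P\cap S')\le S'$.
   Context: Setting (isotypical extension of localities). A locality $(\mathbb{L},\Delta,S)$ consists of a finite partial group $\mathbb{L}$ (viewed as the simplicial set of words $[x_1|\dots|x_n]$ in the domain of the product), a $p$-subgroup $S$ and a set $\Delta$ of subgroups of $S$ with $S\in\Delta$, such that: (O1) a word $[u_1|\dots|u_n]$ is a simplex iff there are $X_0,\dots,X_n\in\Delta$ with ${}^{u_i}X_i=X_{i-1}$, where ${}^{u}X=\{uxu^{-1}\}$; (O2) if $X,Z\in\Delta$, $Y\le Z$ and ${}^{u}X\le Y$ then $N_Y({}^uX)\in\Delta$; (L2) $S$ is maximal among $p$-subgroups. Let $(\mathbb{L}',\Delta',S')$, $(\mathbb{L}'',\Delta'',S'')$ be localities, $\mathrm{Aut}(\mathbb{L}';S')$ the automorphisms of $\mathbb{L}'$ preserving $S'$, with $\Delta'$ invariant under it. An isotypical extension $\mathbb{L}'\to\mathbb{L}\xrightarrow{\tau}\mathbb{L}''$ is given by $\Psi_g\in\mathrm{Aut}(\mathbb{L}';S')$ ($[g]\in\mathbb{L}''_1$) and $\eta(g,h)\in N_{\mathbb{L}'}(S')$ ($[g|h]\in\mathbb{L}''_2$) with $\Psi_1=\mathrm{Id}$, $\eta(1,h)=\eta(g,1)=1$, $\eta(g,h)\Psi_{gh}(x)\eta(g,h)^{-1}=\Psi_g\Psi_h(x)$,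 $\Psi_g(\eta(h,k))\eta(g,hk)=\eta(g,h)\eta(gh,k)$; $\mathbb{L}$ has elements $(x,g)$, simplices $[(x_1,g_1)|\dots|(x_n,g_n)]$ with $[g_1|\dots|g_n]\in\mathbb{L}''$ and $[x_1|\Psi_{g_1}(x_2)|\dots|\Psi_{g_1}\cdots\Psi_{g_{n-1}}(x_n)]\in\mathbb{L}'$, product $(x_1,g_1)(x_2,g_2)=(x_1\Psi_{g_1}(x_2)\eta(g_1,g_2),g_1g_2)$, inverse $(x,g)^{-1}=(\eta(g^{-1},g)^{-1}\Psi_{g^{-1}}(x^{-1}),g^{-1})$; $\mathbb{L}'\subseteq\mathbb{L}$ via $x\mapsto(x,1)$, $\tau(x,g)=g$. Fix a $p$-subgroup $S\le\mathbb{L}$ on which $\tau$ restricts to an extension $S'\to S\to S''$. $\Delta=\{P\le S: P\cap S'\in\Delta',\ \tau(P)\in\Delta''\}$; $\mathbb{T}$ is the set of words $[u_1|\dots|u_n]$ in $\mathbb{L}_1$ admitting $H_0,\dots,H_n\in\Delta$ with ${}^{u_i}H_i=H_{i-1}$; $(\mathbb{T},\Delta,S)$ is a locality, and $\mathcal{F}_\Delta(\mathbb{T})$ is the fusion system over $S$ generated by restrictions of conjugation maps $c_u\colon X\to Y$, $X,Y\in\Delta$, $u\in\mathbb{T}$. *)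

From HB Require Import structures.
From mathcomp Require Import all_boot.

Set Implicit Arguments.
Unset Strict Implicit.
Unset Printing Implicit Defensive.

(* Finite partial groups (Chermak), given by a finite carrier T, a     *)
(* domain D of words, a (total) product Pi : seq T -> T whose values   *)
(* only matter on D, and an inversion inv.                             *)
Section PartialGroup.
Variables (T : finType) (D : pred (seq T)) (Pi : seq T -> T) (inv : T -> T).

Definition pg_one : T := Pi [::].

Definition partial_group : Prop :=
  [/\ forall x, D [:: x],
      forall u v, D (u ++ v) -> D u /\ D v,
      forall x, Pi [:: x] = x &
      forall u v w, D (u ++ v ++ w) ->
        D (u ++ Pi v :: w) /\ Pi (u ++ v ++ w) = Pi (u ++ Pi v :: w)] /\
  [/\ involutive inv &
      forall w, D w -> D (rev (map inv w) ++ w) /\ Pi (rev (map inv w) ++ w) = pg_one].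

Definition pg_subgroup (H : {set T}) : Prop :=
  (forall x, x \in H -> inv x \in H) /\
  (forall w : seq T, all (fun x => x \in H) w -> D w /\ Pi w \in H).

Definition pg_p_subgroup (p : nat) (H : {set T}) : Prop :=
  pg_subgroup H /\ p.-nat #|H|.

Definition conjw (u x : T) : T := Pi [:: u; x; inv u].
Definition conj_defined (u : T) (X : {set T}) : bool :=
  [forall x in X, D [:: u; x; inv u]].
Definition conj_set (u : T) (X : {set T}) : {set T} := [set conjw u x | x in X].
Definition conj_to (u : T) (X Y : {set T}) : bool :=
  conj_defined u X && (conj_set u X == Y).

Definition pg_normalizer (Y W : {set T}) : {set T} := [set y in Y | conj_to y W W].

Definition Delta_word (Delta : {set T} -> Prop) (w : seq T) : Prop :=
  exists Xs : seq {set T},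
    [/\ size Xs = (size w).+1,
        forall i, i < size Xs -> Delta (nth set0 Xs i) &
        forall i, i < size w -> conj_to (nth pg_one w i) (nth set0 Xs i.+1) (nth set0 Xs i)].

Definition locality (p : nat) (S : {set T}) (Delta : {set T} -> Prop) : Prop :=
  [/\ partial_group,
      pg_p_subgroup p S,
      Delta S &
      forall X, Delta X -> pg_subgroup X /\ X \subset S] /\
  [/\
      forall w, (D w <-> Delta_word Delta w),
      (forall X Z Y u, Delta X -> Delta Z -> pg_subgroup Y -> Y \subset Z ->
         conj_defined u X -> conj_set u X \subset Y ->
         Delta (pg_normalizer Y (conj_set u X))) &
      forall P, pg_p_subgroup p P -> S \subset P -> P = S].

Definition pg_aut (a : T -> T) : Prop :=
  [/\ bijective a,
      forall w, D (map a w) = D w &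
      forall w, D w -> a (Pi w) = Pi (map a w)].

Definition pg_autS (S : {set T}) (a : T -> T) : Prop := pg_aut a /\ a @: S = S.

(* fusion system over S generated by the restrictions of the conjugation *)
(* maps c_u : X -> Y with X, Y in Delta and u an element (one-letter    *)
(* word) of Tel.  A morphism is recorded as a pair (P, f) with f a map   *)
(* P -> S (values of f outside P are irrelevant).                       *)
Inductive gen_fusion (S : {set T}) (Delta : {set T} -> Prop) (Tel : T -> Prop)
  : {set T} -> (T -> T) -> Prop :=
| gf_conj X Y u : Delta X -> Delta Y -> Tel u -> conj_defined u X ->
    conj_set u X \subset Y -> gen_fusion S Delta Tel X (conjw u)
| gf_inner P s : s \in S -> pg_subgroup P -> P \subset S ->
    gen_fusion S Delta Tel P (conjw s)
| gf_res P R f : gen_fusion S Delta Tel P f -> pg_subgroup R -> R \subset P ->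
    gen_fusion S Delta Tel R f
| gf_comp P Q f g : gen_fusion S Delta Tel P f -> gen_fusion S Delta Tel Q g ->
    f @: P \subset Q -> gen_fusion S Delta Tel P (g \o f)
| gf_inv P f g : gen_fusion S Delta Tel P f -> {in P &, injective f} ->
    {in P, cancel f g} -> gen_fusion S Delta Tel (f @: P) g
| gf_ext P f g : gen_fusion S Delta Tel P f -> {in P, f =1 g} ->
    gen_fusion S Delta Tel P g.

End PartialGroup.

Section Isotypical.
Variables (T1 T2 : finType).
Variables (D1 : pred (seq T1)) (Pi1 : seq T1 -> T1) (inv1 : T1 -> T1).
Variables (D2 : pred (seq T2)) (Pi2 : seq T2 -> T2) (inv2 : T2 -> T2).
Variables (Psi : T2 -> T1 -> T1) (eta : T2 -> T2 -> T1).

Local Notation one1 := (pg_one Pi1).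
Local Notation one2 := (pg_one Pi2).

Definition isotypical_data (S1 : {set T1}) : Prop :=
  [/\ forall g, pg_autS D1 Pi1 S1 (Psi g),
      forall x, Psi one2 x = x &
      forall g h, D2 [:: g; h] -> eta g h \in pg_normalizer D1 Pi1 inv1 setT S1] /\
  [/\ forall h, eta one2 h = one1 /\ eta h one2 = one1,
      forall g h x, D2 [:: g; h] ->
        D1 [:: eta g h; Psi (Pi2 [:: g; h]) x; inv1 (eta g h)] /\
        Pi1 [:: eta g h; Psi (Pi2 [:: g; h]) x; inv1 (eta g h)] = Psi g (Psi h x) &
      forall g h k, D2 [:: g; h; k] ->
        Pi1 [:: Psi g (eta h k); eta g (Pi2 [:: h; k])] =
        Pi1 [:: eta g h; eta (Pi2 [:: g; h]) k]].

Fixpoint ext_tw (w : seq (T1 * T2)) : seq T1 :=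
  match w with
  | [::] => [::]
  | a :: w' => a.1 :: map (Psi a.2) (ext_tw w')
  end.

Definition ext_D : pred (seq (T1 * T2)) :=
  fun w => D2 (map snd w) && D1 (ext_tw w).

Definition ext_prod2 (a b : T1 * T2) : T1 * T2 :=
  (Pi1 [:: a.1; Psi a.2 b.1; eta a.2 b.2], Pi2 [:: a.2; b.2]).

(* n-fold product (well defined on ext_D by associativity) *)
Definition ext_Pi (w : seq (T1 * T2)) : T1 * T2 :=
  foldr ext_prod2 (one1, one2) w.

Definition ext_inv (a : T1 * T2) : T1 * T2 :=
  (Pi1 [:: inv1 (eta (inv2 a.2) a.2); Psi (inv2 a.2) (inv1 a.1)], inv2 a.2).

(* Delta = { P <= S : P cap S' in Delta', tau(P) in Delta'' } *)
Definition ext_Delta (Delta1 : {set T1} -> Prop) (Delta2 : {set T2} -> Prop)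
  (S : {set T1 * T2}) (P : {set T1 * T2}) : Prop :=
  [/\ pg_subgroup ext_D ext_Pi ext_inv P, P \subset S,
      Delta1 [set x | (x, one2) \in P] &
      Delta2 [set a.2 | a in P]].

Definition ext_Tel Delta1 Delta2 S (u : T1 * T2) : Prop :=
  Delta_word ext_D ext_Pi ext_inv (ext_Delta Delta1 Delta2 S) [:: u].

Definition ext_fusion Delta1 Delta2 S : {set T1 * T2} -> (T1 * T2 -> T1 * T2) -> Prop :=
  gen_fusion ext_D ext_Pi ext_inv S (ext_Delta Delta1 Delta2 S) (ext_Tel Delta1 Delta2 S).

End Isotypical.

From HB Require Import structures.
From mathcomp Require Import all_boot.

Set Implicit Arguments.
Unset Printing Implicit Defensive.

(* The projection tau : L -> L'' is a homomorphism of partial groups, and in a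
   partial group u z u^-1 = 1 forces z = 1; hence every conjugation map c_u
   defined on a subgroup of S preserves the kernel S' = S :&: ker tau in both
   directions.  The generated fusion system inherits this property, since
   restriction, composition, inversion and extensionality all preserve it. *)

Section PartialGroupTheory.
Variables (T : finType) (D : pred (seq T)) (Pi : seq T -> T) (inv : T -> T).
Hypothesis pgL : partial_group D Pi inv.

Local Notation one := (pg_one Pi).

Lemma pg_dom1 x : D [:: x].
Proof. by case: pgL => -[]. Qed.

Lemma pg_dom_cat u v : D (u ++ v) -> D u /\ D v.
Proof. by case: pgL => -[_ Dcat _ _] _; apply: Dcat. Qed.

Lemma pg_Pi1 x : Pi [:: x] = x.
Proof. by case: pgL => -[_ _ Pi1 _] _. Qed.

Lemma pg_collapse u v w :
  D (u ++ v ++ w) -> D (u ++ Pi v :: w) /\ Pi (u ++ v ++ w) = Pi (u ++ Pi v :: w).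
Proof. by case: pgL => -[_ _ _ assoc] _; apply: assoc. Qed.

Lemma pg_insert1 u w : D (u ++ w) -> Pi (u ++ one :: w) = Pi (u ++ w).
Proof. by move=> Duw; have [_ ->] := pg_collapse u [::] w Duw. Qed.

Lemma pg_mulr1 x : Pi [:: x; one] = x.
Proof. by have := pg_insert1 [:: x] [::]; rewrite cats0 pg_Pi1 => ->; last exact: pg_dom1. Qed.

Lemma pg_dom_invw {w} : D w -> D (rev (map inv w) ++ w).
Proof. by case: pgL => _ [_ Dinvw] /Dinvw []. Qed.

Lemma pg_mulVx x : D [:: inv x; x] /\ Pi [:: inv x; x] = one.
Proof. by case: pgL => _ [_ invw]; apply: (invw [:: x] (pg_dom1 x)). Qed.

Lemma pg_mulxV x : D [:: x; inv x] /\ Pi [:: x; inv x] = one.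
Proof.
by case: pgL => _ [invK _]; have := pg_mulVx (inv x); rewrite invK.
Qed.

Lemma pg_Pi_cons x w : D (x :: w) -> Pi (x :: w) = Pi [:: x; Pi w].
Proof. by have := pg_collapse [:: x] w [::]; rewrite cats0 => E /E[_ ->]. Qed.

Lemma pg_Pi_foldr {w} : D w -> Pi w = foldr (fun x y => Pi [:: x; y]) one w.
Proof.
elim: w => [//|x w IHw] Dxw.
have [_ Dw] := pg_dom_cat [:: x] w Dxw.
by rewrite pg_Pi_cons // IHw.
Qed.

Lemma pg_conj_eq1 u z :
  D [:: u; z; inv u] -> Pi [:: u; z; inv u] = one -> z = one.
Proof.
(* From u^-1 (u z u^-1) = u^-1 get z u^-1 = u^-1, then multiply by u on the right. *)
case: pgL => _ [invK _] Dw conj1.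
have Dw6 : D [:: u; inv z; inv u; u; z; inv u].
  by have := pg_dom_invw Dw; rewrite /= invK.
have [Duz Dw4] := pg_dom_cat [:: u; inv z] [:: inv u; u; z; inv u] Dw6.
have zuE : Pi [:: z; inv u] = inv u.
  have [_ E1] := pg_collapse [:: inv u] [:: u; z; inv u] [::] Dw4.
  have [_ E2] := pg_collapse [::] [:: inv u; u] [:: z; inv u] Dw4.
  rewrite /= conj1 pg_mulr1 in E1; rewrite /= (proj2 (pg_mulVx u)) in E2.
  have [_ Dzu] := pg_dom_cat [:: u] [:: z; inv u] Dw.
  by rewrite -[RHS]E1 E2 (pg_insert1 [::] [:: z; inv u]).
have Dzuu : D [:: z; inv u; u].
  have := pg_dom_invw Duz; rewrite /= !invK.
  by case/(pg_dom_cat [:: z; inv u; u] [:: inv z]).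
have [_ E1] := pg_collapse [:: z] [:: inv u; u] [::] Dzuu.
have [_ E2] := pg_collapse [::] [:: z; inv u] [:: u] Dzuu.
rewrite /= (proj2 (pg_mulVx u)) pg_mulr1 in E1.
by rewrite -E1 E2 /= zuE (proj2 (pg_mulVx u)).
Qed.

Lemma pg_conj1 u : Pi [:: u; one; inv u] = one.
Proof. by have [Duu uuE] := pg_mulxV u; rewrite (pg_insert1 [:: u] [:: inv u]). Qed.

End PartialGroupTheory.

Section GeneratedFusion.
Variables (T : finType) (D : pred (seq T)) (Pi : seq T -> T) (inv : T -> T).
Variables (S : {set T}) (Delta : {set T} -> Prop) (Tel : T -> Prop) (K : pred T).
Hypothesis subgroupS : pg_subgroup D Pi inv S.
Hypothesis Delta_subS : forall X, Delta X -> X \subset S.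
Hypothesis conj_stable : forall u x, D [:: u; x; inv u] -> K (conjw Pi inv u x) = K x.

Lemma gen_fusion_stable P f : gen_fusion D Pi inv S Delta Tel P f ->
  forall z, z \in P -> [/\ z \in S, f z \in S & K (f z) = K z].
Proof.
elim=> {P f}.
- move=> X Y u /Delta_subS XS /Delta_subS YS _ Xdef XuY z zX.
  split; first exact: subsetP XS z zX.
    by apply/(subsetP YS)/(subsetP XuY); apply: imset_f.
  by apply: conj_stable; move/forallP: Xdef => /(_ z); rewrite zX.
- move=> P s sS _ PS z zP.
  have zS := subsetP PS z zP.
  have [Dszs szsS] : D [:: s; z; inv s] /\ Pi [:: s; z; inv s] \in S.
    by case: subgroupS => invS wS; apply: wS; rewrite /= sS zS invS.
  by split=> //; apply: conj_stable.
- by move=> P R f _ IHf _ RP z /(subsetP RP)/IHf.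
- move=> P Q f g _ IHf _ IHg fPQ z zP.
  have [zS _ Kf] := IHf z zP.
  have [_ gfzS Kg] := IHg (f z) (subsetP fPQ _ (imset_f f zP)).
  by split=> //=; rewrite Kg.
- move=> P f g _ IHf _ fK _ /imsetP[z zP ->].
  by have [zS fzS Kf] := IHf z zP; rewrite fK.
- by move=> P f g _ IHf fg z zP; rewrite -fg //; apply: IHf.
Qed.

End GeneratedFusion.

Section IsotypicalProjection.
Variables (T1 T2 : finType).
Variables (D1 : pred (seq T1)) (Pi1 : seq T1 -> T1) (inv1 : T1 -> T1).
Variables (D2 : pred (seq T2)) (Pi2 : seq T2 -> T2) (inv2 : T2 -> T2).
Variables (Psi : T2 -> T1 -> T1) (eta : T2 -> T2 -> T1).
Hypothesis pgL2 : partial_group D2 Pi2 inv2.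

Local Notation L_D := (ext_D D1 D2 Psi).
Local Notation L_Pi := (ext_Pi Pi1 Pi2 Psi eta).
Local Notation L_inv := (ext_inv Pi1 inv1 inv2 Psi eta).

Lemma ext_Pi_snd w : D2 (map snd w) -> (L_Pi w).2 = Pi2 (map snd w).
Proof.
move=> Dw; rewrite (pg_Pi_foldr pgL2 Dw).
by elim: w {Dw} => //= a w ->.
Qed.

Lemma ext_conj_snd_eq1 u x : L_D [:: u; x; L_inv u] ->
  ((conjw L_Pi L_inv u x).2 == pg_one Pi2) = (x.2 == pg_one Pi2).
Proof.
case/andP=> Dw _; rewrite /conjw ext_Pi_snd //=.
apply/eqP/eqP=> [|->]; first exact: pg_conj_eq1 Dw.
exact: pg_conj1 pgL2 u.2.
Qed.

End IsotypicalProjection.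

Theorem corollary7p7 (p : nat) (T1 T2 : finType)
  (D1 : pred (seq T1)) (Pi1 : seq T1 -> T1) (inv1 : T1 -> T1)
  (S1 : {set T1}) (Delta1 : {set T1} -> Prop)
  (D2 : pred (seq T2)) (Pi2 : seq T2 -> T2) (inv2 : T2 -> T2)
  (S2 : {set T2}) (Delta2 : {set T2} -> Prop)
  (Psi : T2 -> T1 -> T1) (eta : T2 -> T2 -> T1)
  (S : {set T1 * T2}) :
  prime p ->
  locality D1 Pi1 inv1 p S1 Delta1 ->
  locality D2 Pi2 inv2 p S2 Delta2 ->
  (forall a, pg_autS D1 Pi1 S1 a -> forall P, Delta1 P -> Delta1 (a @: P)) ->
  isotypical_data D1 Pi1 inv1 D2 Pi2 Psi eta S1 ->
  pg_p_subgroup (ext_D D1 D2 Psi) (ext_Pi Pi1 Pi2 Psi eta)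
    (ext_inv Pi1 inv1 inv2 Psi eta) p S ->
  [set x | (x, pg_one Pi2) \in S] = S1 ->
  [set a.2 | a in S] = S2 ->
  forall (P : {set T1 * T2}) (f : T1 * T2 -> T1 * T2),
    ext_fusion D1 Pi1 inv1 D2 Pi2 inv2 Psi eta Delta1 Delta2 S P f ->
    f @: (P :&: [set (x, pg_one Pi2) | x in S1])
      \subset [set (x, pg_one Pi2) | x in S1].
Proof.
move=> _ _ [[pgL2 _ _ _] _] _ _ [subgroupS _] S1E _ P f fusion_f.
apply/subsetP=> _ /imsetP[z /setIP[zP /imsetP[x _ zE]] ->].
have [|_ fzS Kfz] := gen_fusion_stable (fun a => a.2 == pg_one Pi2) subgroupS _
  (ext_conj_snd_eq1 _ _ _ _ _ _ pgL2) fusion_f zP; first by move=> X [].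
have fz2 : (f z).2 = pg_one Pi2 by apply/eqP; rewrite Kfz zE.
apply/imsetP; exists (f z).1; last by rewrite -fz2 -surjective_pairing.
by rewrite -S1E inE -fz2 -surjective_pairing.
Qed.
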